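(* Let $n$ be a positive integer, $q=3^n$, $m=2n$, and let $f(x)=x^d$ with $d=(3^k+1)/2$, where $\gcd(k,2n)=1$, be the Coulter–Matthews planar function on $\mathbb F_{3^m}=\mathbb F_{q^2}$. Let $\mathcal U:=\{(x,y):y+y^q=f(x+x^q)\}\cup\{(\infty)\}$ (the unital of the unitary polarity of $\Pi(f)$ given by $(x,y)\mapsto L_{x^q,y^q}$, $(a)\mapsto N_{a^q}$, $(\infty)\mapsto L_\infty$), and let $\mathcal U_\theta:=\{(x,t\theta):x\in\mathbb F_{q^2},t\in\mathbb F_q\}\cup\{(\infty)\}$ with $\theta\in\mathbb F_{q^2}^*$ such that $\theta^{q+1}$ is a nonsquare in $\mathbb F_q$. Then the subgroups of the shift group $T$ of $\Pi(f)$ fixing $\mathcal U$ and fixing $\mathcal U_\theta$ have orders $3^{2n}$ and $3^{3n}$ respectively. Consequently $\mathcal U$ and $\mathcal U_\theta$ are inequivalent, i.e.\ no collineation of $\Pi(f)$ maps one onto the other.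
   Context: $\Pi(f)$ is the projective plane with points $(x,y)\in\mathbb F_{q^2}^2$ and $(a)$ for $a\in\mathbb F_{q^2}\cup\{\infty\}$, lines $L_{a,b}=\{(x,f(x+a)-b):x\in\mathbb F_{q^2}\}\cup\{(a)\}$, $N_a=\{(a,y):y\in\mathbb F_{q^2}\}\cup\{(\infty)\}$ ($a,b\in\mathbb F_{q^2}$), $L_\infty=\{(a):a\in\mathbb F_{q^2}\cup\{\infty\}\}$. The shift group $T$ consists of the collineations $\tau_{u,v}$ induced by $(x,y)\mapsto(x+u,y+v)$, $u,v\in\mathbb F_{q^2}$. A collineation is a bijection of points mapping lines onto lines. *)

From HB Require Import structures.
From mathcomp Require Import all_boot all_order all_algebra all_field.
Set Implicit Arguments. Unset Strict Implicit. Unset Printing Implicit Defensive.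
Import GRing.Theory.
Local Open Scope ring_scope.

(* Points of Pi(f): inl (x,y) is the affine point (x,y);
   inr (Some a) is the point (a) at infinity; inr None is (infinity). *)
Notation pt F := ((F * F) + option F)%type.

Section PlaneDefs.
Variable F : finFieldType.

Definition lineL (f : F -> F) (a b : F) : {set pt F} :=
  [set p : pt F | match p with
                  | inl (x, y) => y == f (x + a) - b
                  | inr (Some c) => c == a
                  | inr None => false end].

Definition lineN (a : F) : {set pt F} :=
  [set p : pt F | match p with
                  | inl (x, _) => x == a
                  | inr None => true
                  | inr (Some _) => false end].

Definition lineInf : {set pt F} :=
  [set p : pt F | if p is inr _ then true else false].

Definition is_line (f : F -> F) (L : {set pt F}) : Prop :=
  (exists a b, L = lineL f a b) \/ (exists a, L = lineN a) \/ L = lineInf.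

Definition collineation (f : F -> F) (g : pt F -> pt F) : Prop :=
  bijective g /\ forall L, is_line f L -> is_line f (g @: L).

(* the collineation tau_{u,v} induced by (x,y) |-> (x+u, y+v):
   it sends L_{a,b} to L_{a-u,b-v}, hence (a) to (a-u), N_a to N_{a+u},
   and fixes (infinity). *)
Definition tau (u v : F) (p : pt F) : pt F :=
  match p with
  | inl (x, y) => inl (x + u, y + v)
  | inr (Some a) => inr (Some (a - u))
  | inr None => inr None
  end.

(* subgroup of the shift group T fixing a point set S, indexed by (u,v)
   (the map (u,v) |-> tau_{u,v} is injective) *)
Definition shift_stab (S : {set pt F}) : {set F * F} :=
  [set uv : F * F | (tau uv.1 uv.2) @: S == S].

Definition unitalU (q : nat) (f : F -> F) : {set pt F} :=
  [set p : pt F | match p with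
                  | inl (x, y) => y + y ^+ q == f (x + x ^+ q)
                  | inr None => true
                  | inr (Some _) => false end].

Definition unitalUtheta (q : nat) (theta : F) : {set pt F} :=
  [set p : pt F | match p with
                  | inl (x, y) => [exists t : F, (t ^+ q == t) && (y == t * theta)]
                  | inr None => true
                  | inr (Some _) => false end].

End PlaneDefs.

From HB Require Import structures.
From mathcomp Require Import all_boot all_order all_algebra all_field.
From mathcomp Require Import zify ring.
Set Implicit Arguments. Unset Strict Implicit. Unset Printing Implicit Defensive.
Import GRing.Theory.
Local Open Scope ring_scope.

(** The shift (u, v) preserves U iff Tr u = Tr v = 0, where Tr x = x + x^q: the
    orbit of (0, 0) gives Tr v = f (Tr u), and applying the shift twice gives
    -Tr v = f (-Tr u) = Tr v because 2 = -1 and f is even, so f (Tr u) = 0.  It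
    preserves U_theta iff v lies in theta F_q.

    If a collineation g mapped U onto U_theta, conjugating the unitary polarity by g
    would give a polarity rho of Pi(f) whose absolute points are U_theta.  Since
    x^d = y^d forces x = +-y for the Coulter-Matthews exponent d, a line L_{a,b}
    meets a horizontal line in at most a symmetric pair of points; hence rho sends
    (infinity) to L_infinity and each absolute point (w, y) to L_{-w,-y}.  The
    polar of (0, w1^d) is then L_{0, w1^d}, and it contains every absolute point
    (w2, w1^d - w2^d); this forces w2 = +-w1.  But as theta^(q+1) is a nonsquare,
    w^d is never in theta F_q for w <> 0, and a pigeonhole count produces such a
    w2 <> +-w1. *)

Lemma coprime_double_odd (k n : nat) : gcdn k (2 * n) = 1%N -> odd k.
Proof.
move=> gk; apply/negPn; rewrite -dvdn2; apply/negP => k2.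
have : (2 %| gcdn k (2 * n))%N by rewrite dvdn_gcd k2 dvdn_mulr.
by rewrite gk.
Qed.

Lemma pow3S_half (k : nat) : (2 * ((3 ^ k + 1) %/ 2) = 3 ^ k + 1)%N.
Proof. by rewrite mulnC divnK // dvdn2 oddD oddX orbT. Qed.

Lemma pow3S_half_gt0 (k : nat) : (0 < (3 ^ k + 1) %/ 2)%N.
Proof. by rewrite divn_gt0 // addn1 ltnS expn_gt0. Qed.

Lemma pow3S_half_mod4 (k : nat) : odd k -> ((3 ^ k + 1) %/ 2 = 2 %[mod 4])%N.
Proof.
move=> ok; have -> : k = (2 * k./2 + 1)%N.
  by rewrite -[LHS]odd_double_half ok -mul2n addnC.
rewrite expnD expnM.
have : (9 ^ k./2 %% 8 = 1)%N by rewrite -modnXm exp1n.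
set x := (9 ^ k./2)%N; lia.
Qed.

Lemma expr_fix_expn (R : pzSemiRingType) (c : R) (m j : nat) :
  c ^+ m = c -> c ^+ (m ^ j) = c.
Proof.
by move=> cm; elim: j => [|j IHj]; rewrite ?expr1 // expnS exprM cm.
Qed.

Lemma expr_fix_gcdn (R : pzSemiRingType) (c : R) (m a b : nat) :
  c ^+ (m ^ a) = c -> c ^+ (m ^ b) = c -> c ^+ (m ^ gcdn a b) = c.
Proof.
case: (posnP a) => [-> _|a_gt0 ca cb]; first by rewrite gcd0n.
case: (egcdnP b a_gt0) => km kn Bezout _.
have := expr_fix_expn km ca; rewrite -expnM mulnC Bezout expnD exprM.
by rewrite [(kn * b)%N]mulnC expnM (expr_fix_expn kn cb).
Qed.

Section CoulterMatthewsExponent.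
Variables (F : finFieldType) (n k : nat).
Hypotheses (cardF : #|F| = (3 ^ (2 * n))%N) (coprime_k : gcdn k (2 * n) = 1%N).
Local Notation d := ((3 ^ k + 1) %/ 2)%N.

Lemma cm_exponent_even : ~~ odd d.
Proof.
have := pow3S_half_mod4 (coprime_double_odd coprime_k).
rewrite -dvdn2; move: d => e; lia.
Qed.

Lemma cm_sqr_eq1 (c : F) : c ^+ d = 1 -> c ^+ 2 = 1.
Proof.
move=> cd1; have c0 : c != 0.
  apply: contra_eq_neq cd1 => ->.
  by rewrite expr0n gtn_eqF ?pow3S_half_gt0 //= eq_sym oner_eq0.
have k_odd := coprime_double_odd coprime_k.
(* c^(3^k) = c^-1 and c^9 = c force c^4 = 1, and d = 2 mod 4. *)
have c_inv : c ^+ (3 ^ k) = c^-1.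
  apply: (mulIf c0); rewrite mulVf // -exprSr -addn1 -pow3S_half.
  by rewrite mulnC exprM cd1 expr1n.
have c9k : c ^+ (3 ^ (2 * k)) = c by rewrite mulnC expnM exprM c_inv exprVn c_inv invrK.
have c9n : c ^+ (3 ^ (2 * n)) = c by rewrite -cardF expf_card.
have c9 : c ^+ 9 = c.
  have : coprime k (2 * n) by rewrite /coprime coprime_k.
  rewrite coprimeMr => /andP [_ /eqP gcd_kn].
  by have := expr_fix_gcdn c9k c9n; rewrite -muln_gcdr gcd_kn.
have c3 : c ^+ (3 ^ k) = c ^+ 3.
  rewrite -[k]odd_double_half k_odd -mul2n expnD expnM mulnC exprM.
  by rewrite (expr_fix_expn _ c9).
have c4 : c ^+ 4 = 1 by rewrite exprSr -c3 c_inv mulVf.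
rewrite -cd1 (divn_eq d 4) (pow3S_half_mod4 k_odd) exprD [(_ * 4)%N]mulnC.
by rewrite exprM c4 expr1n mul1r.
Qed.

Lemma cm_power_eq (a b : F) : a ^+ d = b ^+ d -> a = b \/ a = - b.
Proof.
have [-> | b0] := eqVneq b 0.
  move/eqP; rewrite expr0n gtn_eqF ?pow3S_half_gt0 // expf_eq0.
  by case/andP => _ /eqP; left.
move=> ab; have : (a / b) ^+ 2 == 1.
  by apply/eqP/cm_sqr_eq1; rewrite expr_div_n ab divff // expf_neq0.
rewrite sqrf_eq1 => /orP [] /eqP /(canRL (divfK b0)) ->.
  by left; rewrite mul1r.
by right; rewrite mulN1r.
Qed.

End CoulterMatthewsExponent.

Lemma pigeonhole_fiber (T T' : finType) (h : T -> T') (A : {set T}) (B : {set T'}) m :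
  {in A, forall x, h x \in B} -> (m * #|B| < #|A|)%N ->
  exists y, (m < #|[set x in A | h x == y]|)%N.
Proof.
move=> hAB A_big; apply/existsP; apply: contraTT A_big => /existsPn small.
rewrite -leqNgt mulnC -sum_nat_const -sum1_card (partition_big h (mem B)) //=.
apply: leq_sum => y _; have := small y; rewrite -leqNgt -sum1_card.
by under [X in (X <= _)%N -> _]eq_bigl do rewrite inE.
Qed.

Section Polarities.
Variables (F : finFieldType) (f : F -> F).

Definition polarity (rho : pt F -> {set pt F}) : Prop :=
  [/\ forall P R, (R \in rho P) = (P \in rho R), injective rho
    & forall P, is_line f (rho P)].

Definition absolute (rho : pt F -> {set pt F}) : {set pt F} := [set P | P \in rho P].

Section Transport.
Variables (g h : pt F -> pt F) (rho : pt F -> {set pt F}).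
Hypotheses (gK : cancel g h) (hK : cancel h g).

Lemma polarity_collineation :
  collineation f g -> polarity rho -> polarity (fun P => g @: rho (h P)).
Proof.
move=> [_ g_line] [rho_sym rho_inj rho_line]; split=> [P R | P R | P].
- by rewrite !(can_imset_pre _ gK) !inE rho_sym.
- move=> E; apply: (can_inj hK); apply: rho_inj; exact: (imset_inj (can_inj gK) E).
- exact/g_line/rho_line.
Qed.

Lemma absolute_collineation :
  absolute (fun P => g @: rho (h P)) = g @: absolute rho.
Proof. by apply/setP => P; rewrite /absolute inE !(can2_imset_pre _ gK hK) !inE. Qed.

End Transport.

Lemma line_through_inf (L : {set pt F}) x y :
  is_line f L -> inr None \in L -> inl (x, y) \in L -> L = lineN x.
Proof. by case=> [[a [b ->]] | [[a ->] | ->]]; rewrite !inE //= => _ /eqP ->. Qed.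

Lemma line_off_inf (L : {set pt F}) :
  is_line f L -> inr None \notin L -> L <> lineInf F -> exists a b, L = lineL f a b.
Proof. by case=> [[a [b ->]] | [[a ->] | ->]] //; [exists a, b | rewrite inE]. Qed.

End Polarities.

Section Shifts.
Variable F : finFieldType.

Lemma tauK (u v : F) : cancel (tau u v) (tau (- u) (- v)).
Proof. by case=> [[x y]|[a|]] //=; rewrite ?addrK // opprK addrK. Qed.

Lemma shift_stabP (S : {set pt F}) u v :
  reflect {in S, forall P, tau u v P \in S} ((u, v) \in shift_stab S).
Proof.
rewrite inE eqEcard (card_imset _ (can_inj (tauK u v))) leqnn andbT sub_imset_pre.
by apply: (iffP subsetP) => sub P /sub; rewrite inE.
Qed.

End Shifts.

Section QuadraticExtension.
Variables (F : finFieldType) (p n : nat).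
Hypotheses (pcharF : p \in [pchar F]) (n_gt0 : (0 < n)%N)
  (cardF : #|F| = (p ^ (2 * n))%N).
Local Notation q := (p ^ n)%N.
Local Notation tr x := (x + x ^+ q).

Lemma q_gt1 : (1 < q)%N.
Proof. by rewrite -{1}(expn0 p) ltn_exp2l // prime_gt1 // (pcharf_prime pcharF). Qed.

Lemma card_sqr : #|F| = (q * q)%N.
Proof. by rewrite cardF mul2n -addnn expnD. Qed.

Lemma conjD (x y : F) : (x + y) ^+ q = x ^+ q + y ^+ q.
Proof. by apply: exprDn_pchar; rewrite pnatX (pnatE _ (pcharf_prime pcharF)) pcharF. Qed.

Lemma conj0 : (0 : F) ^+ q = 0.
Proof. by rewrite expr0n gtn_eqF // ltnW // q_gt1. Qed.

Lemma conjN (x : F) : (- x) ^+ q = - x ^+ q.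
Proof. by apply/eqP; rewrite -addr_eq0 -conjD addNr conj0. Qed.

Lemma conjB (x y : F) : (x - y) ^+ q = x ^+ q - y ^+ q.
Proof. by rewrite conjD conjN. Qed.

Lemma conjK (x : F) : (x ^+ q) ^+ q = x.
Proof. by rewrite -exprM -card_sqr expf_card. Qed.

Lemma conj_inj : injective (fun x : F => x ^+ q).
Proof. exact: (@can_inj _ _ _ (fun x => x ^+ q) conjK). Qed.

Definition Fq : {set F} := [set x | x ^+ q == x].
Definition trace0 : {set F} := [set x | tr x == 0].

Lemma trD (x y : F) : tr (x + y) = tr x + tr y.
Proof. by rewrite conjD addrACA. Qed.

Lemma card_conj_roots_le (c : F) : (#|[set x : F | (x ^+ q == c * x)%R]| <= q)%N.
Proof.
pose P : {poly F} := 'X^q - c *: 'X.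
have sizeP : size P = q.+1.
  rewrite size_polyDl size_polyXn // size_polyN.
  by apply: leq_ltn_trans (size_scale_leq _ _) _; rewrite size_polyX ltnS q_gt1.
have P_neq0 : P != 0 by rewrite -size_poly_eq0 sizeP.
rewrite cardE -ltnS -sizeP max_poly_roots ?enum_uniq //.
by apply/allP => x; rewrite mem_enum inE /root !hornerE => /eqP ->; rewrite subrr.
Qed.

Lemma card_Fq_le : (#|Fq| <= q)%N.
Proof.
rewrite (eq_card (B := [set x | x ^+ q == 1 * x])) ?card_conj_roots_le // => x.
by rewrite !inE mul1r.
Qed.

Lemma card_trace0_le : (#|trace0| <= q)%N.
Proof.
rewrite (eq_card (B := [set x | x ^+ q == -1 * x])) ?card_conj_roots_le // => x.
by rewrite !inE mulN1r addrC addr_eq0.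
Qed.

Section UnitaryPolarity.
Variable d : nat.
Local Notation f := (fun x : F => x ^+ d).

Definition unitary_polar (P : pt F) : {set pt F} :=
  match P with
  | inl (x, y) => lineL f (x ^+ q) (y ^+ q)
  | inr (Some a) => lineN (a ^+ q)
  | inr None => lineInf F
  end.

Lemma unitary_polar_sym P R : (R \in unitary_polar P) = (P \in unitary_polar R).
Proof.
case: P => [[x y]|[a|]]; case: R => [[u v]|[b|]]; rewrite !inE //=.
- apply/eqP/eqP => ->; rewrite conjB conjK -exprAC conjD conjK.
    by rewrite [u ^+ q + x]addrC; ring.
  by rewrite [x ^+ q + u]addrC; ring.
- by apply/eqP/eqP => ->; rewrite conjK.
- by apply/eqP/eqP => ->; rewrite conjK.
Qed.

Lemma unitary_polar_inj : injective unitary_polar.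
Proof.
move=> P R E; have memE X : (X \in unitary_polar P) = (X \in unitary_polar R) by rewrite E.
case: P R E memE => [[x y]|[a|]] [[u v]|[b|]] E memE //;
  try by have := memE (inr None); rewrite !inE.
- have := memE (inr (Some (x ^+ q))); rewrite !inE /= eqxx => /esym/eqP/conj_inj eq_xu.
  subst u; have := memE (inl (0, (x ^+ q) ^+ d - y ^+ q)); rewrite !inE /= add0r eqxx.
  by move=> /esym/eqP/addrI/oppr_inj/conj_inj ->.
- by have := memE (inl (a ^+ q, 0)); rewrite !inE /= eqxx => /esym/eqP/conj_inj ->.
- by have := memE (inl (a ^+ q, 0)); rewrite !inE /= eqxx.
- by have := memE (inl (b ^+ q, 0)); rewrite !inE /= eqxx.
Qed.

Lemma unitary_polar_polarity : polarity f unitary_polar.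
Proof.
split; [exact: unitary_polar_sym | exact: unitary_polar_inj | ].
case=> [[x y]|[a|]] /=; rewrite /is_line.
- by left; exists (x ^+ q), (y ^+ q).
- by right; left; exists (a ^+ q).
- by right; right.
Qed.

Lemma absolute_unitary_polar : absolute unitary_polar = unitalU q f.
Proof.
apply/setP => -[[x y]|[a|]]; rewrite !inE //=.
by rewrite eq_sym subr_eq eq_sym.
Qed.

End UnitaryPolarity.

Section OddCharacteristic.
Hypothesis two_neq0 : (2 : F) != 0.

Lemma addrr_inj : injective (fun x : F => x + x).
Proof.
by move=> x y; rewrite -!mulr2n -(mulr_natl x 2) -(mulr_natl y 2) => /(mulfI two_neq0).
Qed.

Lemma oppr_eq_self (x : F) : (- x == x) = (x == 0).
Proof.
apply/eqP/eqP => [Nx | ->]; last exact: oppr0.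
by apply: addrr_inj; rewrite /= addr0 -{1}Nx addNr.
Qed.

Lemma card_Fq_mul_trace0_ge : (q * q <= #|Fq| * #|trace0|)%N.
Proof.
pose split_conj (x : F) := (x + x ^+ q, x - x ^+ q).
have split_inj : injective split_conj.
  move=> x y [sxy dxy]; apply: (mulfI two_neq0).
  have twice (z : F) : 2 * z = (z + z ^+ q) + (z - z ^+ q) by ring.
  by rewrite !twice sxy dxy.
have : (#|split_conj @: [set: F]| <= #|setX Fq trace0|)%N.
  apply/subset_leq_card/subsetP => _ /imsetP [x _ ->].
  by rewrite !inE /= conjD conjB conjK addrC eqxx /= addrA subrK subrr.
by rewrite (card_imset _ split_inj) cardsX cardsT card_sqr.
Qed.

Lemma card_Fq : #|Fq| = q.
Proof. by have := card_Fq_mul_trace0_ge; have := card_trace0_le; have := card_Fq_le; nia. Qed.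

Lemma card_trace0 : #|trace0| = q.
Proof. by have := card_Fq_mul_trace0_ge; have := card_trace0_le; have := card_Fq_le; nia. Qed.

Section Theta.
Variable theta : F.
Hypotheses (theta_neq0 : theta != 0)
  (theta_nonsquare : ~ (exists s : F, s ^+ q = s /\ s ^+ 2 = theta ^+ (q + 1))).

Definition thetaFq : {set F} := [set t * theta | t in Fq].

Lemma mem_thetaFq y : (y \in thetaFq) = ((y / theta) ^+ q == y / theta).
Proof.
apply/imsetP/eqP => [[t /[!inE] /eqP tq ->] | yq]; first by rewrite mulfK.
by exists (y / theta); rewrite ?inE ?yq ?divfK.
Qed.

Lemma mem_unitalUtheta x y : (inl (x, y) \in unitalUtheta q theta) = (y \in thetaFq).
Proof.
rewrite inE /=; apply/existsP/imsetP => [[t /andP [tq /eqP ->]] | [t tq ->]].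
  by exists t; rewrite ?inE.
by exists t; move: tq; rewrite inE eqxx andbT.
Qed.

Lemma thetaFq0 : 0 \in thetaFq.
Proof. by apply/imsetP; exists 0; rewrite ?inE ?conj0 ?mul0r. Qed.

Lemma thetaFqD y z : y \in thetaFq -> z \in thetaFq -> y + z \in thetaFq.
Proof. by rewrite !mem_thetaFq mulrDl conjD => /eqP -> /eqP ->. Qed.

Lemma card_thetaFq : #|thetaFq| = q.
Proof. by rewrite card_imset ?card_Fq //; exact: mulIf. Qed.

Lemma shift_stab_unitalUtheta : shift_stab (unitalUtheta q theta) = setX [set: F] thetaFq.
Proof.
apply/setP => -[u v]; rewrite in_setX in_setT /=; apply/shift_stabP/idP => [stab | v_in].
  by have := stab (inl (0, 0)); rewrite !mem_unitalUtheta add0r; apply; exact: thetaFq0.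
by case=> [[x y]|[a|]]; rewrite ?mem_unitalUtheta ?inE // => /thetaFqD; apply.
Qed.

Lemma card_shift_stab_unitalUtheta : #|shift_stab (unitalUtheta q theta)| = (p ^ (3 * n))%N.
Proof.
by rewrite shift_stab_unitalUtheta cardsX cardsT card_thetaFq cardF -expnD mulSn addnC.
Qed.

Lemma sqr_notin_thetaFq (r : F) : r != 0 -> r ^+ 2 \notin thetaFq.
Proof.
move=> r0; apply/negP => /imsetP [t /[!inE] /eqP tq r2].
have t0 : t != 0 by apply: contra_neq r0 => t0; apply/eqP; rewrite -sqrf_eq0 r2 t0 mul0r.
apply: theta_nonsquare; exists (r ^+ (q + 1) / t); split.
  by rewrite expr_div_n tq exprD exprMn conjK expr1 [r * _]mulrC.
rewrite expr_div_n -exprM mulnC exprM r2 exprMn [t ^+ (q + 1)]exprD expr1 tq -expr2.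
by rewrite mulrAC divff ?mul1r // expf_neq0.
Qed.

End Theta.

Section PlanarMonomial.
Variable d : nat.
Hypotheses (d_even : ~~ odd d) (powd_eq : forall a b : F, a ^+ d = b ^+ d -> a = b \/ a = - b).
Local Notation f := (fun x : F => x ^+ d).

Lemma exponent_gt0 : (0 < d)%N.
Proof.
rewrite lt0n; apply/eqP => d0; have := @powd_eq 0 1; rewrite d0 !expr0.
by case=> // /eqP; rewrite eq_sym ?oppr_eq0 oner_eq0.
Qed.

Lemma powN (x : F) : (- x) ^+ d = x ^+ d.
Proof. by rewrite -(odd_double_half d) (negbTE d_even) add0n -mul2n !exprM sqrrN. Qed.

Lemma pow_eq0 (x : F) : (x ^+ d == 0) = (x == 0).
Proof. by rewrite expf_eq0 exponent_gt0. Qed.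

Lemma shift_stab_unitalU : (3 : F) = 0 -> shift_stab (unitalU q f) = setX trace0 trace0.
Proof.
move=> three0; apply/setP => -[u v]; rewrite in_setX; apply/shift_stabP/andP => [stab | ].
- have Uuv : inl (u, v) \in unitalU q f.
    by have := stab (inl (0, 0)); rewrite !inE /= !add0r conj0; apply; rewrite eq_sym pow_eq0.
  have double (x : F) : x + x = - x.
    by apply/eqP; rewrite -subr_eq0 opprK -mulr2n -mulrSr -mulr_natl three0 mul0r.
  have := stab _ Uuv; move: Uuv; rewrite !inE /= !trD !double powN => /eqP ->.
  by rewrite oppr_eq_self pow_eq0 => ->.
- case=> /[!inE] /eqP tru0 /eqP trv0 [[x y]|[a|]];
  by rewrite !inE //= !trD tru0 trv0 !addr0.
Qed.

Lemma card_shift_stab_unitalU :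
  (3 : F) = 0 -> #|shift_stab (unitalU q f)| = (p ^ (2 * n))%N.
Proof. by move=> three0; rewrite shift_stab_unitalU // cardsX card_trace0 -card_sqr. Qed.

Lemma lineL_chord (a b w w' y : F) : w != w' ->
  inl (w, y) \in lineL f a b -> inl (w', y) \in lineL f a b -> a + a = - (w + w').
Proof.
rewrite !inE /= => ww' /eqP -> /eqP /addIr /powd_eq [/addIr/eqP | chord].
  by rewrite (negbTE ww').
have -> : a + a = (w + a) + (w' + a) - (w + w') by ring.
by rewrite chord addNr sub0r.
Qed.

Lemma pow_sqr (x : F) : x ^+ d = (x ^+ d./2) ^+ 2.
Proof. by rewrite -exprM mulnC mul2n -[in LHS](odd_double_half d) (negbTE d_even). Qed.

Section NonsquareTheta.
Variable theta : F.
Hypotheses (theta_neq0 : theta != 0)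
  (theta_nonsquare : ~ (exists s : F, s ^+ q = s /\ s ^+ 2 = theta ^+ (q + 1))).

(* y |-> (y / theta)^q - y / theta maps F into trace0 with kernel theta F_q. *)
Lemma exists_pow_diff_in_thetaFq : exists w1 w2 : F,
  [/\ w1 != 0, w2 != w1, w2 != - w1 & w1 ^+ d - w2 ^+ d \in thetaFq theta].
Proof.
pose psi y := (y / theta) ^+ q - y / theta.
have psiB y z : psi (y - z) = psi y - psi z by rewrite /psi mulrBl conjB; ring.
have psi_eq0 y : (psi y == 0) = (y \in thetaFq theta) by rewrite mem_thetaFq // subr_eq0.
have psi_pow : {in [set~ 0], forall w, psi (w ^+ d) \in trace0 :\ 0}.
  move=> w; rewrite in_setC1 => w0.
  rewrite !inE psi_eq0 pow_sqr sqr_notin_thetaFq ?expf_neq0 //=.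
  by rewrite /psi conjB conjK addrA subrK subrr.
have card_trace0D1 : #|trace0 :\ 0| = q.-1.
  by rewrite -card_trace0 (cardsD1 0 trace0) inE add0r conj0 eqxx.
have [|z big_fiber] := pigeonhole_fiber (m := 2) psi_pow.
  by rewrite cardsC1 card_sqr card_trace0D1; have := q_gt1; case: q => [|[|Q]] //; nia.
set X := [set w in [set~ 0] | _] in big_fiber.
have [w1 Xw1] : exists w1, w1 \in X.
  by apply/set0Pn; rewrite -card_gt0 (ltn_trans _ big_fiber).
have /subsetPn [w2 Xw2] : ~~ (X \subset [set w1; - w1]).
  apply: contraTN big_fiber; rewrite -leqNgt => /subset_leq_card /leq_trans; apply.
  by rewrite cards2 ltnS leq_b1.
move: Xw1 Xw2; rewrite !inE => /andP [w1_0 /eqP psi1] /andP [_ /eqP psi2] /norP [w21 w2N1].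
by exists w1, w2; split; rewrite // -psi_eq0 psiB psi1 psi2 subrr.
Qed.

Section AbsoluteUtheta.
Variable rho : pt F -> {set pt F}.
Hypotheses (rho_pol : polarity f rho) (rho_abs : absolute rho = unitalUtheta q theta).

Lemma rho_self P : (P \in rho P) = (P \in unitalUtheta q theta).
Proof. by rewrite -rho_abs inE. Qed.

Lemma rho_inf : rho (inr None) = lineInf F.
Proof.
have [rho_sym rho_inj rho_line] := rho_pol.
have [[a [b E]] | [[a E] | //]] := rho_line (inr None).
  by have := rho_self (inr None); rewrite E !inE.
have a0_self : inl (a, 0) \in rho (inl (a, 0)) by rewrite rho_self mem_unitalUtheta thetaFq0.
have inf_a0 : inr None \in rho (inl (a, 0)) by rewrite rho_sym E !inE.
by have := line_through_inf (rho_line _) inf_a0 a0_self; rewrite -E => /rho_inj.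
Qed.

Lemma rho_lineL w y : exists a b, rho (inl (w, y)) = lineL f a b.
Proof.
have [rho_sym rho_inj rho_line] := rho_pol.
apply: line_off_inf (rho_line _) _ _; first by rewrite rho_sym rho_inf inE.
by rewrite -rho_inf => /rho_inj.
Qed.

Lemma rho_tangent w w' y :
  y \in thetaFq theta -> inl (w', y) \in rho (inl (w, y)) -> w' = w.
Proof.
have [rho_sym rho_inj _] := rho_pol.
move=> y_in on_tangent; apply/eqP; apply: contraT => ww'.
have [[a [b E]] [a' [b' E']]] := (rho_lineL w y, rho_lineL w' y).
have self w'' : inl (w'', y) \in rho (inl (w'', y)) by rewrite rho_self mem_unitalUtheta.
have back : inl (w, y) \in rho (inl (w', y)) by rewrite rho_sym.
have := self w; have := self w'; move: on_tangent back; rewrite E E' => t1 t2 s' s.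
have aa' : a = a'.
  by apply: addrr_inj; rewrite /= (lineL_chord ww' t1 s) (lineL_chord ww' s' t2).
move: s t2; rewrite -aa' !inE /= => /eqP y_b /eqP; rewrite {1}y_b => /addrI /oppr_inj bb'.
have : rho (inl (w, y)) = rho (inl (w', y)) by rewrite E E' aa' bb'.
by move=> /rho_inj [wE]; rewrite wE eqxx in ww'.
Qed.

Lemma rho_affine w y : y \in thetaFq theta -> rho (inl (w, y)) = lineL f (- w) (- y).
Proof.
move=> y_in; have [a [b E]] := rho_lineL w y; rewrite E.
have := rho_self (inl (w, y)); rewrite mem_unitalUtheta y_in E inE /= => /eqP y_b.
(* the mirror image of (w, y) in the axis x = -a of L_{a,b} *)
have reflected : inl (- w - a - a, y) \in rho (inl (w, y)).
  by rewrite E inE /= {1}y_b -powN; apply/eqP; congr (_ ^+ _ - _); ring.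
have wa0 : w + a = 0.
  apply: addrr_inj; rewrite /= addr0 -[RHS](subrr w).
  by rewrite -{2}(rho_tangent y_in reflected); ring.
have a_w : a = - w by apply/eqP; rewrite -addr_eq0 addrC wa0.
have b_y : b = - y by rewrite y_b wa0 expr0n gtn_eqF ?exponent_gt0 // sub0r opprK.
by rewrite a_w b_y.
Qed.

Lemma no_polarity_with_absolute_unitalUtheta : False.
Proof.
have [w1 [w2 [w1_0 w21 w2N1 y_in]]] := exists_pow_diff_in_thetaFq.
have on_polar w s :
    s \in thetaFq theta -> s = w1 ^+ d - w ^+ d -> inl (w, s) \in rho (inl (0, w1 ^+ d)).
  case: rho_pol => rho_sym _ _ s_in s_def.
  by rewrite rho_sym rho_affine // inE /= add0r powN opprK s_def addrC subrK.
have P1 := on_polar w1 0 (thetaFq0 theta) (esym (subrr _)).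
have P2 : inl (- w1, 0) \in rho (inl (0, w1 ^+ d)).
  by apply: on_polar (thetaFq0 theta) _; rewrite powN subrr.
have P3 := on_polar w2 _ y_in erefl.
have [c [e E]] := rho_lineL 0 (w1 ^+ d).
rewrite E in P1 P2 P3.
have c0 : c = 0.
  have w1N : w1 != - w1 by rewrite eq_sym oppr_eq_self.
  by apply: addrr_inj; rewrite /= (lineL_chord w1N P1 P2) subrr oppr0 addr0.
move: P1 P3; rewrite c0 !inE /= !addr0 eq_sym subr_eq0 => /eqP <- /eqP.
rewrite -[w2 ^+ d - _]opprB => /eqP; rewrite eq_sym oppr_eq_self subr_eq0.
case/eqP/powd_eq => [w12 | w1N2]; first by rewrite w12 eqxx in w21.
by rewrite w1N2 opprK eqxx in w2N1.
Qed.

End AbsoluteUtheta.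

Lemma unitalU_unitalUtheta_inequivalent :
  ~ (exists g, collineation f g /\ g @: unitalU q f = unitalUtheta q theta).
Proof.
case=> g [g_col gU]; have [h gK hK] := g_col.1.
apply: (@no_polarity_with_absolute_unitalUtheta (fun P => g @: unitary_polar d (h P))).
  exact: polarity_collineation gK hK g_col (unitary_polar_polarity d).
by rewrite absolute_collineation // absolute_unitary_polar.
Qed.

End NonsquareTheta.

End PlanarMonomial.

End OddCharacteristic.

End QuadraticExtension.

Theorem theorem4p6 (n k : nat) (F : finFieldType) (theta : F) :
  (0 < n)%N ->
  #|F| = (3 ^ (2 * n))%N ->
  gcdn k (2 * n) = 1%N ->
  theta != 0 ->
  ~ (exists s : F, s ^+ (3 ^ n) = s /\ s ^+ 2 = theta ^+ (3 ^ n + 1)) ->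
  let q := (3 ^ n)%N in
  let f := fun x : F => x ^+ ((3 ^ k + 1) %/ 2) in
  #|shift_stab (unitalU q f)| = (3 ^ (2 * n))%N /\
  #|shift_stab (unitalUtheta q theta)| = (3 ^ (3 * n))%N /\
  ~ (exists g : pt F -> pt F,
       collineation f g /\ g @: unitalU q f = unitalUtheta q theta).
Proof.
move=> n_gt0 cardF coprime_k theta_neq0 theta_nonsquare q f.
have pchar3 : 3%N \in [pchar F] := card_finPcharP cardF (isT : prime 3).
have three0 : (3 : F) = 0 := pcharf0 pchar3.
have two_neq0 : (2 : F) != 0.
  by apply: contra_eq_neq three0 => two0; rewrite -addn1 natrD two0 add0r oner_neq0.
have d_even := cm_exponent_even cardF coprime_k.
have powd_eq := cm_power_eq cardF coprime_k.
split; [|split].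
- exact (card_shift_stab_unitalU pchar3 n_gt0 cardF two_neq0 d_even powd_eq three0).
- exact (card_shift_stab_unitalUtheta pchar3 n_gt0 cardF two_neq0 theta_neq0).
- exact (unitalU_unitalUtheta_inequivalent pchar3 n_gt0 cardF two_neq0 d_even powd_eq
    theta_neq0 theta_nonsquare).
Qed.
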